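(* Let $\Delta$ be a simplicial polytopal fan in $\mathbb{R}^d$ with ray generators $\mathbf{v}_1,\ldots,\mathbf{v}_n$, let $\{(\mathbf{u}^{(i)},y^{(i)})\}_{i=1}^m\subset\mathbb{R}^d\times\mathbb{R}$, $U=(\mathbf{u}^{(1)},\ldots,\mathbf{u}^{(m)})^\mathsf{T}$, $\mathbf{y}=(y^{(i)})_i$. The following are equivalent: (i) the solution set $\hat{P}^\Delta(U,\mathbf{y})$ is unbounded; (ii) there is a polytope $P=P(\mathbf{h})\in\mathcal{P}(\Delta)$ with $\mathbf{h}\ne\mathbf{0}$ such that $h_P(\mathbf{u}^{(i)})=0$ for all $i=1,\ldots,m$; (iii) the cone $\ker A_U\cap\mathcal{P}(\Delta)$ is non-trivial.
   Context: A fan is simplicial if every cone is generated by linearly independent vectors; polytopal if it is the normal fan of a polytope. $h_P(\mathbf{u})=\max_{\mathbf{x}\in P}\langle\mathbf{x},\mathbf{u}\rangle$. For $\mathbf{h}\in\mathbb{R}^n$, $P(\mathbf{h})=\{\mathbf{x}\colon\langle\mathbf{x},\mathbf{v}_i\rangle\le h_i\ \forall i\}$. The deformation cone $\mathcal{P}(\Delta)$ is the set of polytopes whose normal fan is coarsened by $\Delta$, identified via support vectors $\mathbf{h}=(h_P(\mathbf{v}_i))_i$ with a closed polyhedral cone in $\mathbb{R}^n$. For $\mathbf{u}\in\mathbb{R}^d$, with $\sigma$ the cone of $\Delta$ containing $\mathbf{u}$ in its relative interior and $\mathbf{u}=\sum_{k\in I_\sigma}\lambda_k\mathbf{v}_k$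 over the generators of $\sigma$, set $[\mathbf{u}]_i=\lambda_i$ for $i\in I_\sigma$ and $0$ otherwise. $A_U$ is the $m\times n$ matrix with rows $[\mathbf{u}^{(i)}]^\mathsf{T}$. The least-squares estimator $\hat{P}^\Delta(U,\mathbf{y})\subseteq\mathbb{R}^n$ is the set of support vectors of polytopes $P\in\mathcal{P}(\Delta)$ minimizing $\frac1m\sum_i(h_P(\mathbf{u}^{(i)})-y^{(i)})^2$. *)

From HB Require Import structures.
From mathcomp Require Import all_boot all_order all_algebra.
From mathcomp Require Import boolp classical_sets reals.
Set Implicit Arguments. Unset Strict Implicit. Unset Printing Implicit Defensive.
Import Order.TTheory GRing.Theory Num.Theory.
Local Open Scope ring_scope.
Local Open Scope classical_set_scope.

Section Defs.
Variables (R : realType) (d n : nat).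

Definition dot (x u : 'rV[R]_d) : R := \sum_(j < d) x 0 j * u 0 j.

Definition is_polytope (P : set 'rV[R]_d) : Prop :=
  exists (k : nat) (V : 'I_k.+1 -> 'rV[R]_d),
    P = [set x | exists mu : 'I_k.+1 -> R,
           (forall j, 0 <= mu j) /\ \sum_j mu j = 1 /\ x = \sum_j mu j *: V j].

Definition suppf (P : set 'rV[R]_d) (u : 'rV[R]_d) : R :=
  sup [set dot x u | x in P].

Definition argmax (P : set 'rV[R]_d) (u : 'rV[R]_d) : set 'rV[R]_d :=
  [set x | P x /\ forall y, P y -> dot y u <= dot x u].
Definition is_face (P F : set 'rV[R]_d) : Prop := exists u, F = argmax P u.
Definition normal_cone (P F : set 'rV[R]_d) : set 'rV[R]_d :=
  [set u | F `<=` argmax P u].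

Variable v : 'I_n -> 'rV[R]_d.

Definition gcone (I : {set 'I_n}) : set 'rV[R]_d :=
  [set x | exists c : 'I_n -> R, (forall i, 0 <= c i) /\
           x = \sum_(i in I) c i *: v i].

(* Delta given by a set S of index sets: cones gcone I, I \in S *)
Definition simplicial_fan (S : {set {set 'I_n}}) : Prop :=
  [/\ finset.set0 \in S,
      (forall I J : {set 'I_n}, I \in S -> J \subset I -> J \in S),
      (forall I, I \in S -> forall c : 'I_n -> R,
          \sum_(i in I) c i *: v i = 0 -> forall i, i \in I -> c i = 0),
      (forall I J, I \in S -> J \in S -> gcone I `&` gcone J = gcone (I :&: J))
    & (forall i, [set i]%SET \in S)].

(* the normal fan of Q (cones of nonempty faces) equals Delta *)
Definition polytopal (S : {set {set 'I_n}}) : Prop :=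
  exists Q, is_polytope Q /\
    [set C | exists F, is_face Q F /\ C = normal_cone Q F] =
    [set C | exists I, I \in S /\ C = gcone I].

Definition coarsened_by (S : {set {set 'I_n}}) (P : set 'rV[R]_d) : Prop :=
  forall I, I \in S -> exists F, is_face P F /\ gcone I `<=` normal_cone P F.

Definition in_defo (S : {set {set 'I_n}}) (P : set 'rV[R]_d) : Prop :=
  is_polytope P /\ coarsened_by S P.

Definition suppvec (P : set 'rV[R]_d) : 'cV[R]_n := \col_i suppf P (v i).

Definition defo_cone (S : {set {set 'I_n}}) : set 'cV[R]_n :=
  [set h | exists P, in_defo S P /\ h = suppvec P].

Definition Ph (h : 'cV[R]_n) : set 'rV[R]_d :=
  [set x | forall i, dot x (v i) <= h i 0].

(* lam = [u]: u in relint of the cone of Delta indexed by I *)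
Definition is_coord (S : {set {set 'I_n}}) (u : 'rV[R]_d) (lam : 'cV[R]_n) :=
  exists I, [/\ I \in S, (forall i, i \in I -> 0 < lam i 0),
              (forall i, i \notin I -> lam i 0 = 0) &
              u = \sum_i lam i 0 *: v i].
Definition coord (S : {set {set 'I_n}}) (u : 'rV[R]_d) : 'cV[R]_n :=
  xget 0 (is_coord S u).

Variable m : nat.
Definition AU (S : {set {set 'I_n}}) (U : 'M[R]_(m, d)) : 'M[R]_(m, n) :=
  \matrix_(i < m, k < n) coord S (row i U) k 0.

Definition lsq_obj (U : 'M[R]_(m, d)) (y : 'cV[R]_m) (P : set 'rV[R]_d) : R :=
  m%:R^-1 * \sum_(i < m) (suppf P (row i U) - y i 0) ^+ 2.

Definition lse (S : {set {set 'I_n}}) (U : 'M[R]_(m, d)) (y : 'cV[R]_m)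
  : set 'cV[R]_n :=
  [set h | exists P, [/\ in_defo S P, h = suppvec P &
             forall Q, in_defo S Q -> lsq_obj U y P <= lsq_obj U y Q]].

Definition bounded_vecs (A : set 'cV[R]_n) : Prop :=
  exists M : R, forall h, A h -> forall k, `|h k 0| <= M.

End Defs.

From Pilot Require Import Defs.
From HB Require Import structures.
From mathcomp Require Import all_boot all_order all_algebra.
From mathcomp Require Import boolp classical_sets reals.
From mathcomp Require Import ring lra.
From mathcomp Require Import topology normedtype derive.
Import Order.TTheory GRing.Theory Num.Theory.
Import numFieldNormedType.Exports.
Local Open Scope ring_scope.

(* Fourier-Motzkin elimination shows that the projection of a polyhedron is
   again cut out by finitely many linear inequalities.  The deformation cone
   is such a projection: h lies in it iff there are points X_I, one for every
   cone I of the fan, with <X_I, v_j> = h_j for j in I and <= h_j for all j.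
   On the deformation cone h_P(u) = [u] . h, since h_P is linear on every cone
   of the fan, so the estimator consists of the minimisers of |A_U h - y|^2
   over this cone.  The image A_U(P(Delta)) is closed (a projection again),
   so minimisers exist, and by strict convexity of the square they all have
   the same image z.  The estimator is thus the polyhedron
   P(Delta) /\ A_U^-1(z), which is unbounded iff its recession cone
   ker A_U /\ P(Delta) is non-trivial.  Finally every P in P(Delta) equals
   P(h_P): a point of P(h_P) outside P would be separated from P by a
   direction c, but c lies in a cone of the fan, where h_P is linear. *)

Set Implicit Arguments. Unset Strict Implicit. Unset Printing Implicit Defensive.

Section FourierMotzkin.
Variable R : realFieldType.

Lemma sum_delta (T : finType) (l : T) (r : T -> R) :
  \sum_l0 ((l0 == l)%:R * r l0) = r l.
Proof.
rewrite (bigD1 l) //= eqxx mul1r big1 ?addr0 // => i /negbTE ->.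
by rewrite mul0r.
Qed.

Lemma slope_le0 (x y : R) : (forall t, x + t * y <= 0) -> y <= 0.
Proof.
move=> H; rewrite leNgt; apply/negP => y_gt0.
have := H ((`|x| + 1) / y); rewrite mulfVK ?gt_eqF //.
have := ler_norm (- x); rewrite normrN; lra.
Qed.

Lemma scalar_elim_le0 (T : finType) (r b : T -> R) :
  (forall l, b l = 0 -> r l <= 0) ->
  (forall l1 l2, 0 < b l1 -> b l2 < 0 -> - b l2 * r l1 + b l1 * r l2 <= 0) ->
  exists s, forall l, r l + s * b l <= 0.
Proof.
move=> r_le0 r_pair.
have below l s : 0 < b l -> s <= - r l / b l -> r l + s * b l <= 0.
  by move=> bl; rewrite -(ler_pM2r bl) mulfVK ?gt_eqF //; lra.
have above l s : b l < 0 -> - r l / b l <= s -> r l + s * b l <= 0.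
  by move=> bl; rewrite -(ler_nM2r bl) mulfVK ?lt_eqF //; lra.
have sign l : [\/ b l = 0, 0 < b l | b l < 0] by case: ltgtP; constructor.
case: (pselect (exists l, 0 < b l)) => [[l0 bl0]|no_pos].
  have [l1 bl1 l1_min] :=
    @arg_minP _ _ _ l0 (fun l => 0 < b l) (fun l => - r l / b l) bl0.
  exists (- r l1 / b l1) => l; case: (sign l) => bl.
    by rewrite bl mulr0 addr0 r_le0.
    exact/below/l1_min.
  apply: above => //; have p : 0 < b l1 * - b l by rewrite mulr_gt0 // oppr_gt0.
  rewrite -(ler_pM2r p).
  have -> : - r l / b l * (b l1 * - b l) = b l1 * r l by field; rewrite lt_eqF.
  have -> : - r l1 / b l1 * (b l1 * - b l) = b l * r l1 by field; rewrite gt_eqF.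
  have := r_pair _ _ bl1 bl; lra.
exists (\sum_l `|r l / b l|) => l; case: (sign l) => bl.
- by rewrite bl mulr0 addr0 r_le0.
- by case: no_pos; exists l.
apply: above => //; rewrite (bigD1 l) //= mulNr -normrN.
have := ler_norm (- (r l / b l)); have : 0 <= \sum_(i | i != l) `|r i / b i|.
  exact: sumr_ge0.
lra.
Qed.

Lemma scalar_elimP (T : finType) (r b : T -> R) :
  (exists s, forall l, r l + s * b l <= 0) <->
  (forall l, b l = 0 -> r l <= 0) /\
  (forall l1 l2, 0 < b l1 -> b l2 < 0 -> - b l2 * r l1 + b l1 * r l2 <= 0).
Proof.
split=> [[s Hs]|[]]; last exact: scalar_elim_le0.
split=> [l bl0|l1 l2 b1 b2]; first by have := Hs l; rewrite bl0 mulr0 addr0.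
have := Hs l1; have := Hs l2; have := ltW b1; have := ltW b2; nra.
Qed.

(* Fourier-Motzkin combinations: keep the rows with b l = 0 and cancel b in
   every pair of rows with b l1 > 0 > b l2. *)
Definition fm_comb (T : finType) (b : T -> R) (q : T + T * T) (l : T) : R :=
  match q with
  | inl l0 => if b l0 == 0 then (l == l0)%:R else 0
  | inr (l1, l2) => if (0 < b l1) && (b l2 < 0) then
                      - b l2 * (l == l1)%:R + b l1 * (l == l2)%:R else 0
  end.

Lemma fm_combP (T : finType) (b r : T -> R) :
  (exists s, forall l, r l + s * b l <= 0) <->
  forall q, \sum_l fm_comb b q l * r l <= 0.
Proof.
have sumE q : \sum_l fm_comb b q l * r l =
  match q with
  | inl l0 => if b l0 == 0 then r l0 else 0
  | inr (l1, l2) => if (0 < b l1) && (b l2 < 0) then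
                      - b l2 * r l1 + b l1 * r l2 else 0
  end.
  case: q => [l0|[l1 l2]] /=; case: ifP => _; rewrite ?sum_delta //;
    try by rewrite big1 // => l _; rewrite mul0r.
  under eq_bigr => l _ do rewrite mulrDl -!mulrA.
  by rewrite big_split /= -!mulr_sumr !sum_delta.
rewrite scalar_elimP; split=> [[H0 H2] [l0|[l1 l2]]|H]; last split.
- by rewrite sumE; case: eqP => // /H0.
- by rewrite sumE; case: ifP => // /andP[]; apply: H2.
- by move=> l0 /eqP b0; have := H (inl l0); rewrite sumE b0.
- by move=> l1 l2 b1 b2; have := H (inr (l1, l2)); rewrite sumE b1 b2.
Qed.

Definition linear_form (V : finType) (B : (V -> R) -> R) :=
  forall c w1 w2, B (fun x => c * w1 x + w2 x) = c * B w1 + B w2.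

Lemma linear_form0 (V : finType) (B : (V -> R) -> R) :
  linear_form B -> B (fun _ => 0) = 0.
Proof.
move=> lB; have := lB (-1) (fun _ => 0) (fun _ => 0).
have -> : (fun _ : V => -1 * 0 + 0) = (fun _ => 0 : R).
  by apply: funext => x; rewrite mulr0 addr0.
by rewrite mulN1r addNr.
Qed.

Lemma linear_form_sum (V T : finType) (L : T -> R) (B : T -> (V -> R) -> R) :
  (forall l, linear_form (B l)) -> linear_form (fun w => \sum_l L l * B l w).
Proof.
move=> lB c w1 w2; rewrite mulr_sumr -big_split /=.
by apply: eq_bigr => l _; rewrite lB mulrDr mulrCA.
Qed.

Definition feasible_on (V T : finType) (F : {set V}) (B : T -> (V -> R) -> R)
    (a : T -> R) :=
  exists w : V -> R, (forall x, x \notin F -> w x = 0) /\ forall l, a l + B l w <= 0.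

Lemma feasible_on_elim (V T : finType) (F : {set V}) (x0 : V)
    (B : T -> (V -> R) -> R) :
  (forall l, linear_form (B l)) -> x0 \in F ->
  exists (T1 : finType) (L : T1 -> T -> R), forall a,
    feasible_on F B a <->
    feasible_on (F :\ x0) (fun q w => \sum_l L q l * B l w)
                          (fun q => \sum_l L q l * a l).
Proof.
move=> lB x0F; pose e x : R := (x == x0)%:R; pose b l := B l e.
exists _, (fm_comb b) => a.
have combE w q : \sum_l fm_comb b q l * a l + \sum_l fm_comb b q l * B l w =
                 \sum_l fm_comb b q l * (a l + B l w).
  by rewrite -big_split; apply: eq_bigr => l _; rewrite mulrDr.
split=> [[w [wF Hw]]|[w' [w'F Hw']]].
  pose w' x := if x == x0 then 0 else w x.
  have wE l : B l w = w x0 * b l + B l w'.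
    rewrite -lB; congr (B l); apply: funext => x.
    by rewrite /e /w'; case: eqP => [->|_]; rewrite ?mulr1 ?addr0 ?mulr0 ?add0r.
  exists w'; split=> [x|q].
    by rewrite in_setD1 negb_and negbK /w'; case: eqP => // _ /wF.
  rewrite combE; apply: (fm_combP b (fun l => a l + B l w')).1; exists (w x0) => l.
  by rewrite -addrA (addrC (B l w')) -wE.
have [s Hs] : exists s, forall l, (a l + B l w') + s * b l <= 0.
  by apply/fm_combP => q; rewrite -combE.
exists (fun x => s * e x + w' x); split=> [x xF|l].
  have xx0 : x != x0 by apply: contraNneq xF => ->.
  by rewrite /e (negbTE xx0) mulr0 add0r w'F // in_setD1 xx0.
rewrite lB -/(b l); have := Hs l; lra.
Qed.

Lemma fourier_motzkin_on (V T : finType) (F : {set V}) (B : T -> (V -> R) -> R) :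
  (forall l, linear_form (B l)) ->
  exists (T' : finType) (L : T' -> T -> R), forall a,
    feasible_on F B a <-> forall l', \sum_l L l' l * a l <= 0.
Proof.
move: {2}#|F| (erefl #|F|) => k; elim: k T B F => [|k IH] T B F cardF lB.
  have F0 : F = finset.set0 by apply/eqP; rewrite -cards_eq0 cardF.
  exists T, (fun l' l => (l == l')%:R) => a; split=> [[w [w0 Hw]] l'|H].
    have wE : w = (fun _ => 0) by apply: funext => x; rewrite w0 // F0 inE.
    by rewrite sum_delta; have := Hw l'; rewrite wE linear_form0 ?addr0.
  exists (fun _ => 0); split=> // l.
  by rewrite linear_form0 // addr0; have := H l; rewrite sum_delta.
have [x0 x0F] : exists x0, x0 \in F by apply/card_gt0P; rewrite cardF.
have [T1 [L1 HL1]] := feasible_on_elim lB x0F.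
have cardF' : #|F :\ x0| = k by move: cardF; rewrite (cardsD1 x0) x0F => -[].
have [T2 [L2 HL2]] := IH _ _ _ cardF' (fun q => linear_form_sum (L1 q) lB).
exists T2, (fun l' l => \sum_q L2 l' q * L1 q l) => a; rewrite HL1 HL2.
suff sumE l' : \sum_l (\sum_q L2 l' q * L1 q l) * a l =
               \sum_q L2 l' q * \sum_l L1 q l * a l.
  by split=> H l'; [rewrite sumE | rewrite -sumE].
under eq_bigr => l _ do rewrite mulr_suml.
rewrite exchange_big; apply: eq_bigr => q _.
by rewrite mulr_sumr; apply: eq_bigr => l _; rewrite mulrA.
Qed.

Theorem fourier_motzkin (V T : finType) (B : T -> (V -> R) -> R) :
  (forall l, linear_form (B l)) ->
  exists (T' : finType) (L : T' -> T -> R), forall a,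
    (exists w, forall l, a l + B l w <= 0) <-> forall l', \sum_l L l' l * a l <= 0.
Proof.
move=> /(fourier_motzkin_on [set: V]) [T' [L HL]]; exists T', L => a; rewrite -HL.
split=> [[w Hw]|[w [_ Hw]]]; exists w => //.
by split=> // x; rewrite inE.
Qed.

Lemma feasible_recession (V T : finType) (B : T -> (V -> R) -> R)
    (beta : (V -> R) -> R) (a : T -> R) :
  (forall l, linear_form (B l)) -> linear_form beta ->
  (forall t, exists w, (forall l, a l + B l w <= 0) /\ t <= beta w) ->
  exists w, (forall l, B l w <= 0) /\ 1 <= beta w.
Proof.
move=> lB lbeta unbounded.
pose B' q w := if q is Some l then B l w else - beta w.
have lB' q : linear_form (B' q).
  case: q => [l|] c w1 w2 /=; first exact: lB.
  by rewrite lbeta; ring.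
have [T' [L HL]] := fourier_motzkin lB'.
pose a0 q := if q is Some l then a l else 0.
pose e (q : option T) : R := if q is Some _ then 0 else 1.
have [w Hw] : exists w, forall q, e q + B' q w <= 0.
  apply/HL => l'; apply: (@slope_le0 (\sum_q L l' q * a0 q)) => t.
  have [w [Hw tw]] := unbounded t.
  have : \sum_q L l' q * (a0 q + t * e q) <= 0.
    apply: (HL _).1; exists w => -[l|] /=.
      by rewrite mulr0 addr0 Hw.
    by rewrite mulr1 add0r subr_le0.
  congr (_ <= 0); rewrite mulr_sumr -big_split /=.
  by apply: eq_bigr => q _; rewrite mulrDr mulrCA.
exists w; split=> [l|]; [have := Hw (Some l) | have := Hw None]; rewrite /= ?add0r; lra.
Qed.

End FourierMotzkin.

Local Open Scope classical_set_scope.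

Definition sgb (R : pzRingType) (b : bool) : R := if b then 1 else -1.

Lemma sgb_le0P (R : realDomainType) (x : R) : (forall b, sgb R b * x <= 0) <-> x = 0.
Proof.
split=> [H|-> b]; last by rewrite mulr0.
by have := H true; have := H false; rewrite /sgb; lra.
Qed.

Section Polytope.
Variables (R : realType) (d : nat).
Implicit Types (x u : 'rV[R]_d) (P : set 'rV[R]_d).

Lemma dotDl x1 x2 u : dot (x1 + x2) u = dot x1 u + dot x2 u.
Proof. by rewrite /dot -big_split; apply: eq_bigr => j _; rewrite mxE mulrDl. Qed.

Lemma dotZl c x u : dot (c *: x) u = c * dot x u.
Proof. by rewrite /dot mulr_sumr; apply: eq_bigr => j _; rewrite mxE mulrA. Qed.

Lemma dotZr c x u : dot x (c *: u) = c * dot x u.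
Proof. by rewrite /dot mulr_sumr; apply: eq_bigr => j _; rewrite mxE mulrCA. Qed.

Lemma dot0l u : dot 0 u = 0.
Proof. by rewrite /dot big1 // => j _; rewrite mxE mul0r. Qed.

Lemma dot0r x : dot x 0 = 0.
Proof. by rewrite /dot big1 // => j _; rewrite mxE mulr0. Qed.

Lemma dot_delta x j : dot x (delta_mx 0 j) = x 0 j.
Proof.
rewrite /dot (bigD1 j) //= mxE !eqxx mulr1 big1 ?addr0 // => k /negbTE jk.
by rewrite mxE jk andbF mulr0.
Qed.

Lemma dot_suml (I : finType) (A : {pred I}) (f : I -> 'rV[R]_d) u :
  dot (\sum_(i in A) f i) u = \sum_(i in A) dot (f i) u.
Proof.
rewrite /dot; under eq_bigr => j _ do rewrite summxE mulr_suml.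
by rewrite exchange_big.
Qed.

Lemma dot_sumr (I : finType) (A : {pred I}) (f : I -> 'rV[R]_d) x :
  dot x (\sum_(i in A) f i) = \sum_(i in A) dot x (f i).
Proof.
rewrite /dot; under eq_bigr => j _ do rewrite summxE mulr_sumr.
by rewrite exchange_big.
Qed.

Lemma suppf_attained P x0 u : P x0 -> (forall x, P x -> dot x u <= dot x0 u) ->
  suppf P u = dot x0 u.
Proof.
move=> Px0 x0_max; apply/eqP; rewrite eq_le; apply/andP; split.
  by apply: ge_sup; [exists (dot x0 u), x0 | move=> _ [x Px <-]; exact: x0_max].
apply: sup_upper_bound; last by exists x0.
by split; [exists (dot x0 u), x0 | exists (dot x0 u) => _ [x Px <-]; exact: x0_max].
Qed.

Definition conv (k : nat) (V : 'I_k.+1 -> 'rV[R]_d) : set 'rV[R]_d :=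
  [set x | exists mu : 'I_k.+1 -> R,
           (forall j, 0 <= mu j) /\ \sum_j mu j = 1 /\ x = \sum_j mu j *: V j].

Lemma conv_vertex k (V : 'I_k.+1 -> 'rV[R]_d) i : conv V (V i).
Proof.
exists (fun j => (j == i)%:R); split=> [j|]; first by rewrite ler0n.
split; first by rewrite (bigD1 i) //= eqxx big1 ?addr0 // => j /negbTE ->.
rewrite (bigD1 i) //= eqxx scale1r big1 ?addr0 // => j /negbTE ->.
by rewrite scale0r.
Qed.

Lemma conv_le k (V : 'I_k.+1 -> 'rV[R]_d) u M :
  (forall i, dot (V i) u <= M) -> forall x, conv V x -> dot x u <= M.
Proof.
move=> VM x [mu [mu_ge0 [mu_sum1 ->]]].
rewrite dot_suml; under eq_bigr => j _ do rewrite dotZl.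
have -> : M = \sum_j mu j * M by rewrite -mulr_suml mu_sum1 mul1r.
by apply: ler_sum => j _; rewrite ler_wpM2l.
Qed.

Lemma polytope_argmax P u : is_polytope P ->
  exists2 x0, P x0 & forall x, P x -> dot x u <= dot x0 u.
Proof.
move=> [k [V ->]].
have [i0 _ i0_max] := @arg_maxP _ _ _ ord0 xpredT (fun i => dot (V i) u) erefl.
by exists (V i0); [exact: conv_vertex | apply: conv_le => i; apply: i0_max].
Qed.

Lemma suppf_ge P u x : is_polytope P -> P x -> dot x u <= suppf P u.
Proof.
move=> /(polytope_argmax u) [x0 Px0 x0_max] Px.
by rewrite (suppf_attained Px0 x0_max) x0_max.
Qed.

End Polytope.

Section Separation.
Variables (R : realType) (d k : nat) (V : 'I_k.+1 -> 'rV[R]_d).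

(* The system mu >= 0, sum mu = 1, sum_i mu_i V_i = z in the unknown mu, with
   each equation written as two inequalities; its constant terms are affine
   in z. *)
Definition conv_row := ('I_k.+1 + (bool + 'I_d * bool))%type.

Definition conv_form (l : conv_row) (mu : 'I_k.+1 -> R) : R :=
  match l with
  | inl i => - mu i
  | inr (inl b) => sgb R b * \sum_i mu i
  | inr (inr (j, b)) => - sgb R b * \sum_i mu i * V i 0 j
  end.

Definition conv_cst (l : conv_row) : R :=
  if l is inr (inl b) then - sgb R b else 0.

Definition conv_dir (l : conv_row) : 'rV[R]_d :=
  if l is inr (inr (j, b)) then sgb R b *: delta_mx 0 j else 0.

Lemma linear_conv_form l : linear_form (conv_form l).
Proof.
move=> c w1 w2; case: l => [i|[b|[j b]]] /=.
- ring.
- rewrite big_split /= -mulr_sumr; ring.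
- under eq_bigr => i _ do rewrite mulrDl -mulrA.
  rewrite big_split /= -mulr_sumr; ring.
Qed.

Lemma conv_systemP z :
  (exists mu, forall l, (conv_cst l + dot z (conv_dir l)) + conv_form l mu <= 0) <->
  conv V z.
Proof.
have coordE (mu : 'I_k.+1 -> R) j :
    (\sum_i mu i *: V i) 0 j = \sum_i mu i * V i 0 j.
  by rewrite summxE; apply: eq_bigr => i _; rewrite mxE.
split=> [[mu H]|[mu [mu_ge0 [mu_sum1 ->]]]].
  exists mu; split=> [i|]; first by have := H (inl i); rewrite /= dot0r !add0r oppr_le0.
  split.
    apply/eqP; rewrite -subr_eq0; apply/eqP/sgb_le0P => b.
    by have := H (inr (inl b)); rewrite /= dot0r; lra.
  apply/matrixP => i j; rewrite (ord1 i) coordE; apply/eqP; rewrite -subr_eq0.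
  apply/eqP/sgb_le0P => b; have := H (inr (inr (j, b))).
  by rewrite /= add0r dotZr dot_delta; lra.
exists mu => -[i|[b|[j b]]] /=.
- by rewrite dot0r !add0r oppr_le0.
- by rewrite dot0r addr0 mu_sum1 mulr1 addNr.
- by rewrite add0r dotZr dot_delta coordE mulNr addrN.
Qed.

Lemma conv_separation x : ~ conv V x ->
  exists c, forall y, conv V y -> dot y c < dot x c.
Proof.
move=> xNV; have [T' [L HL]] := fourier_motzkin linear_conv_form.
have [l' pos] : exists l', 0 < \sum_l L l' l * (conv_cst l + dot x (conv_dir l)).
  apply: contrapT => nopos; apply/xNV/conv_systemP/HL => l'.
  by rewrite leNgt; apply/negP => ?; apply: nopos; exists l'.
pose c := \sum_l L l' l *: conv_dir l.
have affineE z : \sum_l L l' l * (conv_cst l + dot z (conv_dir l)) =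
                 \sum_l L l' l * conv_cst l + dot z c.
  rewrite dot_sumr -big_split; apply: eq_bigr => l _.
  by rewrite dotZr mulrDr.
exists c => y /conv_systemP /HL /(_ l'); move: pos; rewrite !affineE; lra.
Qed.

End Separation.

Section Fan.
Variables (R : realType) (d n : nat) (v : 'I_n -> 'rV[R]_d).
Variable S : {set {set 'I_n}}.

Lemma gcone_vertex (I : {set 'I_n}) i : i \in I -> gcone v I (v i).
Proof.
move=> iI; exists (fun j => (j == i)%:R); split=> [j|]; first by rewrite ler0n.
rewrite (bigD1 i) //= eqxx scale1r big1 ?addr0 // => j /andP[_ /negbTE ->].
by rewrite scale0r.
Qed.

Lemma in_defo_argmax P (I : {set 'I_n}) : in_defo v S P -> I \in S ->
  exists2 x0, P x0 &
    forall w, gcone v I w -> forall x, P x -> dot x w <= dot x0 w.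
Proof.
move=> [pP cP] IS; have [F [[u0 ->] IF]] := cP I IS.
have [x0 Px0 x0_max] := polytope_argmax u0 pP.
by exists x0 => // w /IF /(_ x0) [].
Qed.

Lemma suppf_gcone P (I : {set 'I_n}) (c : 'I_n -> R) :
  in_defo v S P -> I \in S -> (forall i, 0 <= c i) ->
  suppf P (\sum_(i in I) c i *: v i) = \sum_(i in I) c i * suppf P (v i).
Proof.
move=> dP IS c_ge0; have [x0 Px0 x0_max] := in_defo_argmax dP IS.
rewrite (suppf_attained Px0 (x0_max _ _)); last by exists c.
rewrite dot_sumr; apply: eq_bigr => i iI.
by rewrite dotZr (suppf_attained Px0 (x0_max _ (gcone_vertex iI))).
Qed.

Lemma polytopal_cover u : polytopal v S -> exists2 I, I \in S & gcone v I u.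
Proof.
move=> [Q [pQ fanE]].
have : [set C | exists F, is_face Q F /\ C = normal_cone Q F]
         (normal_cone Q (argmax Q u)) by exists (argmax Q u); split=> //; exists u.
by rewrite fanE => -[I [IS IE]]; exists I; rewrite // -IE => x [].
Qed.

Hypotheses (sS : simplicial_fan v S) (pS : polytopal v S).

Lemma coordP u : is_coord v S u (Defs.coord v S u).
Proof.
have [S0 S_sub _ _ _] := sS; apply: xgetPex.
have [I IS [c [c_ge0 ->]]] := polytopal_cover u pS.
pose J := [set i in I | c i != 0].
exists (\col_i (if i \in J then c i else 0)), J; split.
- by apply: (S_sub I J IS); apply/fintype.subsetP => i; rewrite inE => /andP[].
- move=> i iJ; rewrite mxE iJ lt_def c_ge0 andbT.
  by move: iJ; rewrite inE => /andP[].
- by move=> i /negbTE iJ; rewrite mxE iJ.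
rewrite [RHS](bigID (mem I)) /= [X in _ = _ + X]big1 ?addr0; last first.
  by move=> i /negbTE iI; rewrite mxE inE iI scale0r.
apply: eq_bigr => i iI; rewrite mxE inE iI /=.
by case: eqP => [->|]; rewrite ?scale0r.
Qed.

Lemma suppf_coord P u : in_defo v S P ->
  suppf P u = \sum_k Defs.coord v S u k 0 * suppf P (v k).
Proof.
move=> dP; have [I [IS lam_gt0 lam_eq0 uE]] := coordP u.
have lam_ge0 i : 0 <= Defs.coord v S u i 0.
  by case: (boolP (i \in I)) => iI; [rewrite ltW // lam_gt0 | rewrite lam_eq0].
rewrite [in LHS]uE (bigID (mem I)) /= [X in _ + X]big1 ?addr0; last first.
  by move=> i iI; rewrite lam_eq0 // scale0r.
rewrite suppf_gcone // [RHS](bigID (mem I)) /= [X in _ = _ + X]big1 ?addr0 //.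
by move=> i iI; rewrite lam_eq0 // mul0r.
Qed.

Lemma AU_suppvec m (U : 'M[R]_(m, d)) P i : in_defo v S P ->
  (AU v S U *m suppvec v P) i 0 = suppf P (row i U).
Proof.
move=> dP; rewrite mxE (suppf_coord _ dP).
by apply: eq_bigr => k _; rewrite !mxE.
Qed.

Lemma in_defo_Ph P : in_defo v S P -> P = Ph v (suppvec v P).
Proof.
move=> dP; have pP := dP.1; apply/seteqP; split=> [x Px i|x xPh].
  by rewrite mxE; apply: suppf_ge.
have [k [V PE]] := pP; rewrite PE; apply: contrapT => xNV.
have [c c_sep] := conv_separation xNV.
have [I IS [g [g_ge0 cE]]] := polytopal_cover c pS.
have [x0 Px0 x0_max] := polytope_argmax c pP.
have x_le : dot x c <= dot x0 c.
  rewrite -(suppf_attained Px0 x0_max) cE suppf_gcone // dot_sumr.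
  by apply: ler_sum => i _; rewrite dotZr ler_wpM2l //; have := xPh i; rewrite mxE.
by have := c_sep x0; rewrite /conv -PE => /(_ Px0); lra.
Qed.

End Fan.

Lemma enum_image_ord (T : finType) (U : Type) (A : {set T}) (f : T -> U) t0 :
  t0 \in A -> exists k (V : 'I_k.+1 -> U),
    (forall i, exists2 t, t \in A & V i = f t) /\
    (forall t, t \in A -> exists i, V i = f t).
Proof.
move=> At0; pose s := enum A; have s_gt0 : (0 < size s)%N.
  by rewrite -cardE; apply/card_gt0P; exists t0.
exists (size s).-1, (fun i => f (nth t0 s i)); split=> [i|t At].
  have i_lt : (i < size s)%N by case: i => i /=; rewrite prednK.
  by exists (nth t0 s i) => //; rewrite -mem_enum mem_nth.
have ti : (index t s < (size s).-1.+1)%N by rewrite prednK // index_mem mem_enum.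
by exists (Ordinal ti); rewrite /= nth_index // mem_enum.
Qed.

Section DeformationCone.
Variables (R : realType) (d n : nat) (v : 'I_n -> 'rV[R]_d).
Variable S : {set {set 'I_n}}.

(* X I plays the vertex of P(h) whose normal cone contains the cone of I. *)
Definition cone_vertices (h : 'cV[R]_n) (X : {set 'I_n} -> 'rV[R]_d) :=
  forall I, I \in S -> (forall j, j \in I -> dot (X I) (v j) = h j 0) /\
                      (forall j, dot (X I) (v j) <= h j 0).

Lemma defo_cone_vertices h : defo_cone v S h -> exists X, cone_vertices h X.
Proof.
move=> [P [dP ->]].
have /choice [X HX] : forall I, exists x, I \in S -> P x /\
    forall w, gcone v I w -> forall y, P y -> dot y w <= dot x w.
  move=> I; case: (boolP (I \in S)) => IS; last by exists 0.
  by have [x0 Px0 x0_max] := in_defo_argmax dP IS; exists x0.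
exists X => I IS; have [PX X_max] := HX I IS; split=> j.
  by move=> jI; rewrite mxE; apply/esym/suppf_attained/X_max/gcone_vertex.
by rewrite mxE; apply: suppf_ge => //; case: dP.
Qed.

Hypothesis sS : simplicial_fan v S.

Lemma cone_vertices_defo h X : cone_vertices h X -> defo_cone v S h.
Proof.
move=> hX; have [S0 _ _ _ S1] := sS.
have [k [V [VX XV]]] := enum_image_ord X S0.
pose P := conv V.
have P_le x : P x -> forall j, dot x (v j) <= h j 0.
  move=> Px j; apply: (conv_le _ Px) => i.
  by have [I IS ->] := VX i; have [_] := hX I IS; apply.
have PX I : I \in S -> P (X I) by move=> /XV [i <-]; apply: conv_vertex.
have hE : suppvec v P = h.
  apply/matrixP => j i; rewrite (ord1 i) mxE.
  have [Xj _] := hX _ (S1 j); rewrite -(Xj j) ?inE //.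
  apply: suppf_attained (PX _ (S1 j)) _ => x /P_le /(_ j).
  by rewrite Xj ?inE.
exists P; split=> //; split; first by exists k, V.
move=> I IS; exists (argmax P (\sum_(i in I) v i)).
split; first by exists (\sum_(i in I) v i).
move=> _ [c [c_ge0 ->]] x [Px x_max]; split=> // y Py.
have x_tight i : i \in I -> dot x (v i) = h i 0.
  have slack_ge0 j : 0 <= h j 0 - dot x (v j) by rewrite subr_ge0 P_le.
  suff slack0 : \sum_(j in I) (h j 0 - dot x (v j)) = 0.
    by move=> iI; apply/eqP; rewrite eq_sym -subr_eq0 (psumr_eq0P _ slack0).
  apply/eqP; rewrite eq_le sumr_ge0 // andbT sumrB subr_le0.
  have := x_max _ (PX _ IS); rewrite !dot_sumr.
  by under eq_bigr => j jI do rewrite (proj1 (hX _ IS)) //.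
rewrite !dot_sumr; apply: ler_sum => i iI.
by rewrite !dotZr x_tight // ler_wpM2l // P_le.
Qed.

Lemma defo_coneP h : defo_cone v S h <-> exists X, cone_vertices h X.
Proof.
by split=> [/defo_cone_vertices|[X /cone_vertices_defo]].
Qed.

Lemma defo_cone0 : defo_cone v S 0.
Proof.
apply/defo_coneP; exists (fun _ => 0) => I IS.
by split=> [j _|j]; rewrite dot0l mxE.
Qed.

Lemma defo_cone_conic a b h1 h2 : 0 <= a -> 0 <= b ->
  defo_cone v S h1 -> defo_cone v S h2 -> defo_cone v S (a *: h1 + b *: h2).
Proof.
move=> a_ge0 b_ge0 /defo_coneP [X1 hX1] /defo_coneP [X2 hX2].
apply/defo_coneP; exists (fun I => a *: X1 I + b *: X2 I) => I IS.
have [E1 L1] := hX1 I IS; have [E2 L2] := hX2 I IS.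
split=> [j jI|j]; rewrite dotDl !dotZl !mxE; first by rewrite E1 // E2.
by rewrite lerD // ler_wpM2l.
Qed.

End DeformationCone.

Lemma closed_feasible (R : realFieldType) (Z : topologicalType) (V T : finType)
    (B : T -> (V -> R) -> R) (a : T -> Z -> R) :
  (forall l, linear_form (B l)) -> (forall l, continuous (a l)) ->
  closed [set z | exists w, forall l, a l z + B l w <= 0].
Proof.
move=> lB a_cont; have [T' [L HL]] := fourier_motzkin lB.
have -> : [set z | exists w, forall l, a l z + B l w <= 0] = \bigcap_(l' in setT)
            ((fun z => \sum_l L l' l * a l z) @^-1` [set r | r <= 0]).
  apply/seteqP; split=> z /=; first by move=> /(HL (a^~ z)) H l' _; exact: H.
  by move=> H; apply/(HL (a^~ z)) => l'; exact: H.
apply: closed_bigI => l' _; apply: preimage_closed; last exact: closed_le.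
move=> z _; apply: continuous_big => [|l _ x]; first exact: add_continuous.
by apply: continuousM; [exact: cst_continuous | exact: a_cont].
Qed.

Section NearestPoint.
Variables (R : realType) (m : nat).

Definition sqdist (z y : 'rV[R]_m) := \sum_i (z 0 i - y 0 i) ^+ 2.

Lemma sqdist_continuous y : continuous (sqdist ^~ y).
Proof.
have -> : sqdist ^~ y = fun z => \sum_i (z 0 i - y 0 i) * (z 0 i - y 0 i).
  by apply: funext => z; apply: eq_bigr => i _; rewrite expr2.
apply: continuous_big => [|i _ z]; first exact: add_continuous.
have coordB : continuous (fun x : 'rV[R]_m => x 0 i - y 0 i).
  by move=> x; apply: continuousB; [exact: coord_continuous | exact: cst_continuous].
exact: continuousM (coordB z) (coordB z).
Qed.

Lemma closed_sqdist_min (Z : set 'rV[R]_m) y : closed Z -> Z !=set0 ->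
  exists2 z, Z z & forall z', Z z' -> sqdist z y <= sqdist z' y.
Proof.
move=> cZ [z0 Zz0]; pose rho := sqdist z0 y.
pose K := Z `&` [set z | sqdist z y <= rho].
have cK : closed K.
  apply: closedI => //.
  rewrite -[X in closed X]/(sqdist ^~ y @^-1` [set r | r <= rho]).
  by apply: preimage_closed => [z _|]; [exact: sqdist_continuous | exact: closed_le].
pose box i := `[- (1 + rho + `|y 0 i|), 1 + rho + `|y 0 i|].
have K_box : K `<=` [set z | forall i, box i (z 0 i)].
  move=> z [_ z_le] i /=; rewrite /box /= in_itv /= -ler_norml.
  have : (z 0 i - y 0 i) ^+ 2 <= rho.
    apply: le_trans z_le; rewrite /sqdist (bigD1 i) //= lerDl.
    by apply: sumr_ge0 => j _; rewrite sqr_ge0.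
  have := ler_normD (z 0 i - y 0 i) (y 0 i); rewrite subrK.
  have : `|z 0 i - y 0 i| <= 1 + (z 0 i - y 0 i) ^+ 2.
    rewrite -real_normK ?num_real //; have := normr_ge0 (z 0 i - y 0 i); nra.
  lra.
have compK : compact K.
  apply: subclosed_compact cK _ K_box.
  by apply: rV_compact => i; exact: segment_compact.
have [z /set_mem [Zz _] z_min] := EVT_min_rV (ex_intro _ z0 (conj Zz0 (lexx rho)))
  compK (continuous_subspaceT (@sqdist_continuous y)).
exists z => // z' Zz'; have [z'_le|z'_gt] := lerP (sqdist z' y) rho.
  by apply: z_min; apply/mem_set.
by apply: le_trans (ltW z'_gt); have := z_min z0 (mem_set (conj Zz0 (lexx rho))).
Qed.

End NearestPoint.

Section ConeSystem.
Variables (R : realType) (d n : nat) (v : 'I_n -> 'rV[R]_d).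
Variable S : {set {set 'I_n}}.
Hypothesis sS : simplicial_fan v S.

(* The unknowns are a support vector h and a candidate vertex X I for every I. *)
Definition cone_var := ('I_n + ({set 'I_n} * 'I_d))%type.
Definition hof (w : cone_var -> R) : 'cV[R]_n := \col_j w (inl j).
Definition Xof (w : cone_var -> R) (I : {set 'I_n}) : 'rV[R]_d :=
  \row_k w (inr (I, k)).

Definition cone_row := ({set 'I_n} * 'I_n * bool)%type.
Definition cone_form (l : cone_row) (w : cone_var -> R) : R :=
  let: (K, j, b) := l in
  if K \in S then
    if b then (if j \in K then w (inl j) - dot (Xof w K) (v j) else 0)
    else dot (Xof w K) (v j) - w (inl j)
  else 0.

Lemma hofD c w1 w2 : hof (fun x => c * w1 x + w2 x) = c *: hof w1 + hof w2.
Proof. by apply/matrixP => i j; rewrite !mxE. Qed.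

Lemma linear_cone_form l : linear_form (cone_form l).
Proof.
move=> c w1 w2; case: l => [[I j] b] /=.
have -> : Xof (fun x => c * w1 x + w2 x) I = c *: Xof w1 I + Xof w2 I.
  by apply/matrixP => i k; rewrite !mxE.
rewrite dotDl dotZl; case: (I \in S); last by rewrite mulr0 addr0.
by case: b; [case: (j \in I); [ring | rewrite mulr0 addr0] | ring].
Qed.

Lemma defo_cone_system h :
  defo_cone v S h <-> exists w, hof w = h /\ forall l, cone_form l w <= 0.
Proof.
rewrite (defo_coneP sS); split=> [[X hX]|[w [<- w_le0]]].
  pose w q := match q with inl j => h j 0 | inr (K, k) => X K 0 k end.
  have XE I : Xof w I = X I by apply/matrixP => i k; rewrite (ord1 i) mxE.
  exists w; split=> [|[[K j] b] /=].
    by apply/matrixP => j i; rewrite (ord1 i) mxE.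
  rewrite XE; case: ifP => // KS; have [Xeq Xle] := hX K KS.
  by case: b; [case: ifP => // jI; rewrite Xeq // subrr | rewrite subr_le0].
exists (Xof w) => I IS; split=> [j jI|j].
  have := w_le0 (I, j, true); have := w_le0 (I, j, false).
  by rewrite /= IS jI mxE; lra.
by have := w_le0 (I, j, false); rewrite /= IS mxE subr_le0.
Qed.

Variables (m : nat) (U : 'M[R]_(m, d)).

Definition image_row := (cone_row + 'I_m * bool)%type.
Definition image_form (l : image_row) (w : cone_var -> R) : R :=
  match l with
  | inl l0 => cone_form l0 w
  | inr (i, b) => sgb R b * (AU v S U *m hof w) i 0
  end.
Definition image_cst (z : 'cV[R]_m) (l : image_row) : R :=
  if l is inr (i, b) then - sgb R b * z i 0 else 0.

Lemma linear_image_form l : linear_form (image_form l).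
Proof.
case: l => [l0|[i b]]; first exact: linear_cone_form.
by move=> c w1 w2 /=; rewrite hofD mulmxDr -scalemxAr !mxE; ring.
Qed.

Lemma image_systemP z w :
  (forall l, image_cst z l + image_form l w <= 0) <->
  (forall l, cone_form l w <= 0) /\ AU v S U *m hof w = z.
Proof.
split=> [H|[w_le0 /matrixP wz] [l0|[i b]] /=]; last 2 first.
- by rewrite add0r w_le0.
- by rewrite wz mulNr addNr.
split=> [l0|]; first by have := H (inl l0); rewrite /= add0r.
apply/matrixP => i j; rewrite (ord1 j); apply/eqP; rewrite -subr_eq0; apply/eqP.
by apply/sgb_le0P => b; have := H (inr (i, b)); rewrite /= mulNr mulrBr; lra.
Qed.

Lemma defo_image_system z :
  (exists h, defo_cone v S h /\ AU v S U *m h = z) <->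
  exists w, forall l, image_cst z l + image_form l w <= 0.
Proof.
split=> [[h [/defo_cone_system [w [<- w_le0]] wz]]|[w /image_systemP [w_le0 wz]]].
  by exists w; apply/image_systemP.
by exists (hof w); split=> //; apply/defo_cone_system; exists w.
Qed.

Lemma closed_defo_image :
  closed [set z : 'rV[R]_m | exists h, defo_cone v S h /\ AU v S U *m h = z^T].
Proof.
rewrite (_ : mkset _ = [set z | exists w, forall l,
           image_cst z^T l + image_form l w <= 0]).
  apply: closed_feasible linear_image_form _ => -[l0|[i b]].
    exact: cst_continuous.
  have -> : (fun z : 'rV_m => image_cst z^T (inr (i, b))) = fun z => - sgb R b * z 0 i.
    by apply: funext => z; rewrite /= mxE.
  move=> z; apply: (@continuousM R _ (fun=> - sgb R b)).
    exact: cst_continuous.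
  exact: coord_continuous.
by apply/seteqP; split=> z /defo_image_system.
Qed.

Lemma defo_image_recession z k b :
  (forall t, exists h,
     [/\ defo_cone v S h, AU v S U *m h = z & t <= sgb R b * h k 0]) ->
  exists g, [/\ defo_cone v S g, AU v S U *m g = 0 & g != 0].
Proof.
move=> unbounded.
have lbeta : linear_form (fun w : cone_var -> R => sgb R b * w (inl k)).
  by move=> c w1 w2; ring.
have [|w [w_le0 w_k]] :=
    feasible_recession linear_image_form lbeta (a := image_cst z).
  move=> t; have [h [/defo_cone_system [w [hw w_le0]] hz th]] := unbounded t.
  by exists w; split; [apply/image_systemP; rewrite hw | rewrite -hw mxE in th].
have /image_systemP [cone_le0 w0] : forall l, image_cst 0 l + image_form l w <= 0.
  move=> l; have := w_le0 l.
  by case: l => [l0|[i b']]; rewrite /= ?mxE ?mulr0 add0r.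
exists (hof w); split=> //; first by apply/defo_cone_system; exists w.
apply: contraTneq w_k => /matrixP /(_ k 0); rewrite !mxE => ->.
by rewrite mulr0 ler10.
Qed.

End ConeSystem.

Lemma sum_sqr_midpoint (R : realFieldType) (I : finType) (z1 z2 : I -> R) :
  \sum_i z1 i ^+ 2 + \sum_i z2 i ^+ 2 <= 2 * \sum_i ((z1 i + z2 i) / 2) ^+ 2 ->
  forall i, z1 i = z2 i.
Proof.
move=> le_mid.
have parallelogram : 2 * \sum_i ((z1 i + z2 i) / 2) ^+ 2 +
    2^-1 * \sum_i (z1 i - z2 i) ^+ 2 = \sum_i z1 i ^+ 2 + \sum_i z2 i ^+ 2.
  by rewrite !mulr_sumr -!big_split /=; apply: eq_bigr => i _; field.
have diff_ge0 k : 0 <= (z1 k - z2 k) ^+ 2 by exact: sqr_ge0.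
have diff0 : \sum_i (z1 i - z2 i) ^+ 2 = 0.
  have : 2^-1 * \sum_i (z1 i - z2 i) ^+ 2 <= 0 by lra.
  rewrite pmulr_rle0 ?invr_gt0 // => diff_le0.
  by apply/eqP; rewrite eq_le diff_le0 sumr_ge0.
move=> i; apply/eqP; rewrite -subr_eq0 -sqrf_eq0.
by rewrite (psumr_eq0P (fun j _ => diff_ge0 j) diff0).
Qed.

Section LeastSquares.
Variables (R : realType) (d n : nat) (v : 'I_n -> 'rV[R]_d).
Variable S : {set {set 'I_n}}.
Hypotheses (sS : simplicial_fan v S) (pS : polytopal v S).
Variables (m : nat) (U : 'M[R]_(m, d)) (y : 'cV[R]_m).

Definition sqerr (h : 'cV[R]_n) := sqdist (AU v S U *m h)^T y^T.

Lemma lsq_obj_le P Q : in_defo v S P -> in_defo v S Q ->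
  (lsq_obj U y P <= lsq_obj U y Q) = (sqerr (suppvec v P) <= sqerr (suppvec v Q)).
Proof.
have objE P' : in_defo v S P' -> lsq_obj U y P' = m%:R^-1 * sqerr (suppvec v P').
  move=> dP'; rewrite /lsq_obj /sqerr /sqdist; congr (_ * _).
  by apply: eq_bigr => i _; rewrite ![_^T _ _]mxE AU_suppvec.
(* for m = 0 both objectives vanish, as 0^-1 = 0 and the sums are empty *)
move=> dP dQ; rewrite !objE //; case: (posnP m) => [m0|m_gt0].
  by rewrite /sqerr /sqdist !big1 ?lexx // => i; have := ltn_ord i; rewrite {2}m0.
by rewrite ler_pM2l // invr_gt0 ltr0n.
Qed.

Lemma lseP h : lse v S U y h <->
  defo_cone v S h /\ forall h', defo_cone v S h' -> sqerr h <= sqerr h'.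
Proof.
split=> [[P [dP -> P_min]]|[[P [dP ->]] h_min]].
  by split=> [|_ [Q [dQ ->]]]; [exists P | rewrite -lsq_obj_le // P_min].
by exists P; split=> // Q dQ; rewrite lsq_obj_le // h_min //; exists Q.
Qed.

Lemma lse_AU_eq h1 h2 : lse v S U y h1 -> lse v S U y h2 ->
  AU v S U *m h1 = AU v S U *m h2.
Proof.
move=> /lseP [C1 min1] /lseP [C2 min2].
pose hm := 2^-1 *: h1 + 2^-1 *: h2.
have Cm : defo_cone v S hm by apply: defo_cone_conic; rewrite ?invr_ge0.
pose z (h : 'cV[R]_n) i := (AU v S U *m h) i 0 - y i 0.
have sqerrE h : sqerr h = \sum_i z h i ^+ 2.
  by apply: eq_bigr => i _; rewrite ![_^T _ _]mxE.
have zm i : z hm i = (z h1 i + z h2 i) / 2.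
  by rewrite /z /hm mulmxDr -!scalemxAr !mxE; field.
have midE : \sum_i ((z h1 i + z h2 i) / 2) ^+ 2 = sqerr hm.
  by rewrite sqerrE; apply: eq_bigr => i _; rewrite zm.
have z12 : forall i, z h1 i = z h2 i.
  apply: sum_sqr_midpoint; rewrite midE -!sqerrE.
  by have := min1 _ Cm; have := min2 _ Cm; lra.
by apply/matrixP => i j; rewrite (ord1 j); have := z12 i; rewrite /z; lra.
Qed.

Lemma lse_exists : exists h, lse v S U y h.
Proof.
have [|z [h [Ch hz]] z_min] :=
    closed_sqdist_min y^T (closed_defo_image sS (U := U)) _.
  by exists 0, 0; split; [exact: defo_cone0 | rewrite mulmx0 trmx0].
exists h; apply/lseP; split=> // h' Ch'.
by rewrite /sqerr hz trmxK; apply: z_min; exists h'; rewrite trmxK.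
Qed.

Lemma lse_shift h g t : lse v S U y h -> defo_cone v S g -> AU v S U *m g = 0 ->
  0 <= t -> lse v S U y (h + t *: g).
Proof.
move=> /lseP [Ch h_min] Cg Ag t_ge0; apply/lseP; split=> [|h' Ch'].
  by rewrite -[h]scale1r; apply: defo_cone_conic.
by rewrite /sqerr mulmxDr -scalemxAr Ag scaler0 addr0; apply: h_min.
Qed.

End LeastSquares.

Lemma unbounded_coord (R : realType) n (A : set 'cV[R]_n) : ~ bounded_vecs A ->
  exists k b, forall t, exists h, A h /\ t <= sgb R b * h k 0.
Proof.
move=> unbounded; apply: contrapT => bounded; apply: unbounded.
have /choice [M HM] : forall kb : 'I_n * bool,
    exists M, forall h, A h -> sgb R kb.2 * h kb.1 0 <= M.
  move=> [k b]; apply: contrapT => noM; apply: bounded; exists k, b => t.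
  apply: contrapT => no_t; apply: noM; exists t => h Ah.
  by rewrite leNgt; apply/negP => lt; apply: no_t; exists h; split=> //; exact: ltW.
exists (\sum_kb `|M kb|) => h Ah k.
have le_sum b : sgb R b * h k 0 <= \sum_kb `|M kb|.
  apply: le_trans (HM (k, b) h Ah) _; apply: le_trans (ler_norm _) _.
  by rewrite (bigD1 (k, b)) //= lerDl sumr_ge0.
by rewrite ler_norml; have := le_sum true; have := le_sum false; rewrite /sgb; lra.
Qed.

Section Recession.
Variables (R : realType) (d n : nat) (v : 'I_n -> 'rV[R]_d).
Variable S : {set {set 'I_n}}.
Hypotheses (sS : simplicial_fan v S) (pS : polytopal v S).
Variables (m : nat) (U : 'M[R]_(m, d)) (y : 'cV[R]_m).

Lemma lse_unbounded_recession : ~ bounded_vecs (lse v S U y) ->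
  exists g, [/\ defo_cone v S g, AU v S U *m g = 0 & g != 0].
Proof.
move=> /unbounded_coord [k [b unbounded]]; have [h0 L0] := lse_exists sS pS U y.
apply: (defo_image_recession sS (z := AU v S U *m h0) (k := k) (b := b)) => t.
have [h [Lh th]] := unbounded t; exists h; split=> //.
  by have [] := (lseP sS pS U y h).1 Lh.
exact: lse_AU_eq Lh L0.
Qed.

Lemma recession_lse_unbounded g :
  [/\ defo_cone v S g, AU v S U *m g = 0 & g != 0] -> ~ bounded_vecs (lse v S U y).
Proof.
move=> [Cg Ag g_neq0] [M HM]; have [h0 L0] := lse_exists sS pS U y.
have [k gk] : exists k, g k 0 != 0.
  apply: contrapT => g0; case/eqP: g_neq0; apply/matrixP => i j.
  by rewrite (ord1 j) mxE; apply: contrapT => gi; apply: g0; exists i; exact/eqP.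
have gk_gt0 : 0 < `|g k 0| by rewrite normr_gt0.
pose t := (`|M| + `|h0 k 0| + 1) / `|g k 0|.
have t_ge0 : 0 <= t by rewrite divr_ge0 // !addr_ge0.
have := HM _ (lse_shift sS pS L0 Cg Ag t_ge0) k; rewrite !mxE.
have tgk : `|t * g k 0| = `|M| + `|h0 k 0| + 1.
  by rewrite normrM ger0_norm // mulfVK // gt_eqF.
have := ler_normD (h0 k 0 + t * g k 0) (- h0 k 0).
rewrite addrAC subrr add0r tgk normrN; have := ler_norm M; lra.
Qed.

End Recession.

Unset Implicit Arguments.

Theorem proposition3p3 (R : realType) (d n m : nat) (v : 'I_n -> 'rV[R]_d)
  (S : {set {set 'I_n}}) (U : 'M[R]_(m, d)) (y : 'cV[R]_m) :
  simplicial_fan v S -> polytopal v S ->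
  [<-> ~ bounded_vecs (lse v S U y);
       exists (P : set 'rV[R]_d) (h : 'cV[R]_n),
         [/\ in_defo v S P, h = suppvec v P, P = Ph v h, h != 0 &
             forall i : 'I_m, suppf P (row i U) = 0];
       exists h : 'cV[R]_n, [/\ defo_cone v S h, AU v S U *m h = 0 & h != 0]].
Proof.
move=> sS pS; tfae.
- move=> /(lse_unbounded_recession sS pS) [g [[P [dP gE]] Ag g_neq0]].
  exists P, g; split=> //; first by rewrite gE; apply: (in_defo_Ph pS dP).
  by move=> i; rewrite -(AU_suppvec sS pS U i dP) -gE Ag mxE.
- move=> [P [h [dP hE _ h_neq0 hU]]]; exists h; split=> //; first by exists P.
  by apply/matrixP => i j; rewrite (ord1 j) hE (AU_suppvec sS pS U i dP) hU mxE.
- by move=> [g g_rec]; exact: recession_lse_unbounded g_rec.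
Qed.
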